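(* Let $L$ be a linear continuum with endpoints, let $(f_i:i\in I)$ be an indiscernible sequence of single elements of $M_L$ (indexed by a linear order $I$), and let $(a_i:i\in I)\in\mathrm{im}(f_i:i\in I)$. Then $(a_i:i\in I)$ is either nondecreasing or nonincreasing in $i$.
   Context: A linear continuum is a dense linear order with the least upper bound property; with endpoints means it has a least and greatest element. $M_L$ is the set of functions $f:L\to[0,1]$ that are nondecreasing, continuous in the order topology, with $\inf f=0$ and $\sup f=1$, with the sup metric, regarded as a metric structure in the language of binary predicates $\varphi_\alpha$ ($\alpha\in\mathbb{Q}\cap[0,1]$), where $\varphi_\alpha(f,g)=f(t)$ for any $t\in L$ with $f(t)+g(t)=\alpha$ (independent of the choice of $t$). $\mathrm{im}(f_i:i\in I)=\{(f_i(t))_{i\in I}:t\in L\}$. A sequence is indiscernible if every formula takes the same value on all increasing tuples from it. *)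

From mathcomp Require Import all_boot all_order all_algebra.
From mathcomp Require Import all_classical all_reals.
Set Implicit Arguments. Unset Strict Implicit. Unset Printing Implicit Defensive.
Import Order.TTheory GRing.Theory Num.Theory.
Local Open Scope classical_set_scope.
Local Open Scope ring_scope.

Section LinearContinuum.
Context {d : Order.disp_t} (T : orderType d).

Definition dense_order := forall x y : T, (x < y)%O -> exists z : T, (x < z)%O /\ (z < y)%O.

Definition lub_property :=
  forall A : set T, A !=set0 -> (exists b, forall x, A x -> (x <= b)%O) ->
  exists s, (forall x, A x -> (x <= s)%O) /\
            (forall b, (forall x, A x -> (x <= b)%O) -> (s <= b)%O).

Definition has_endpoints :=
  (exists b : T, forall x, (b <= x)%O) /\ (exists t : T, forall x, (x <= t)%O).

Definition linear_continuum_with_endpoints :=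
  [/\ dense_order, lub_property & has_endpoints].

(* Basic open sets of the order topology: intervals (a,b), where a missing
   endpoint (None) means the ray is unbounded on that side. *)
Definition in_order_interval (a b : option T) (y : T) : bool :=
  (if a is Some a' then (a' < y)%O else true) &&
  (if b is Some b' then (y < b')%O else true).
End LinearContinuum.

Section ML.
Context (R : realType) {d : Order.disp_t} (L : orderType d).

Definition order_continuous (f : L -> R) :=
  forall (t : L) (e : R), 0 < e -> exists a b : option L,
    in_order_interval a b t /\
    forall y, in_order_interval a b y -> `|f y - f t| < e.

Definition inML (f : L -> R) :=
  [/\ (forall t, 0 <= f t <= 1),
      (forall x y, (x <= y)%O -> f x <= f y),
      order_continuous f,
      inf (range f) = 0 &
      sup (range f) = 1].

Definition ML := {f : L -> R | inML f}.

(* phi_alpha(f,g) = f(t) for any t with f(t)+g(t) = alpha (the value is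
   independent of t, so we take the supremum of the common value) *)
Definition phi_val (f g : ML) (α : R) : R :=
  sup ((sval f) @` [set t | sval f t + sval g t = α]).

Definition dist_val (f g : ML) : R :=
  sup (range (fun t => `|sval f t - sval g t|)).
End ML.

(* Continuous-logic formulas in the language {phi_alpha : alpha in Q cap [0,1]}
   (plus the metric d), with the standard full set of connectives
   0, 1, 1-x, x/2, truncated subtraction, and quantifiers sup/inf. *)
Inductive formula : Type :=
| FPhi (α : {q : rat | 0 <= q <= 1}) (i j : nat)
| FDist (i j : nat)
| FZero
| FOne
| FNeg (φ : formula)
| FHalf (φ : formula)
| FMinus (φ ψ : formula)
| FSup (k : nat) (φ : formula)
| FInf (k : nat) (φ : formula).

Fixpoint fv (φ : formula) : seq nat :=
  match φ with
  | FPhi _ i j => [:: i; j]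
  | FDist i j => [:: i; j]
  | FZero | FOne => [::]
  | FNeg φ | FHalf φ => fv φ
  | FMinus φ ψ => fv φ ++ fv ψ
  | FSup k φ | FInf k φ => [seq m <- fv φ | m != k]
  end.

Definition upd {X : Type} (env : nat -> X) (k : nat) (x : X) : nat -> X :=
  fun m => if m == k then x else env m.

Fixpoint eval (R : realType) {d : Order.disp_t} (L : orderType d)
  (env : nat -> ML R L) (φ : formula) : R :=
  match φ with
  | FPhi α i j => phi_val (env i) (env j) (ratr (sval α))
  | FDist i j => dist_val (env i) (env j)
  | FZero => 0
  | FOne => 1
  | FNeg φ => 1 - eval env φ
  | FHalf φ => eval env φ / 2
  | FMinus φ ψ => Num.max (eval env φ - eval env ψ) 0
  | FSup k φ => sup (range (fun g : ML R L => eval (upd env k g) φ))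
  | FInf k φ => inf (range (fun g : ML R L => eval (upd env k g) φ))
  end.

Definition indiscernible (R : realType) {d : Order.disp_t} (L : orderType d)
  {dI : Order.disp_t} (I : orderType dI) (f : I -> ML R L) :=
  forall (φ : formula) (n : nat) (s s' : nat -> I),
    all (fun k => (k < n)%N) (fv φ) ->
    (forall a b, (a < b < n)%N -> (s a < s b)%O) ->
    (forall a b, (a < b < n)%N -> (s' a < s' b)%O) ->
    eval (fun k => f (s k)) φ = eval (fun k => f (s' k)) φ.

From mathcomp Require Import all_boot all_order all_algebra.
From mathcomp Require Import all_classical all_reals.
From mathcomp Require Import ring lra.
Import Order.TTheory GRing.Theory Num.Theory.
Local Open Scope ring_scope.
Local Open Scope classical_set_scope.

(* Consider, for rational parameters, the formula
     psi(x_0, x_1) = sup_g min((phi_alpha(g, x_0) - c1)^+, (phi_beta(x_1, g) - c2)^+) / 2.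
   If some t has x_0(t) + c1 < alpha and c2 < beta <= x_1(t), a steep ramp g that leaves 0
   just after x_0 passes the value x_0(t) makes psi positive; if some t has
   alpha <= x_0(t) + c1, x_1(t) <= c2 and beta <= c1 + c2, monotonicity of g, x_0 and x_1
   forces psi = 0.  Hence if at a common point t we had f_i(t) < f_k(t) and
   f_l(t) < f_j(t) with i < j and k < l, suitable parameters would make psi separate
   (f_i, f_j) from (f_k, f_l), against indiscernibility.  Applied to the two pairs of a
   triple i < j < k, this rules out strict peaks and valleys of i |-> f_i(t), and a real
   function on a linear order without them is monotone. *)

Section NoPeakNoValley.
Context {dI : Order.disp_t} {I : orderType dI} {R : realDomainType} (a : I -> R).
Hypothesis no_peak : forall {i j k}, (i < j)%O -> (j < k)%O -> a j <= a i \/ a j <= a k.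
Hypothesis no_valley : forall {i j k}, (i < j)%O -> (j < k)%O -> a i <= a j \/ a k <= a j.

Lemma rise_ge_before {p q r} : (p < q)%O -> a p < a q -> (r <= p)%O -> a r <= a p.
Proof.
move=> pq apq; rewrite le_eqVlt => /predU1P[-> // | rp].
by case: (no_valley rp pq) => h; lra.
Qed.

Lemma rise_le_after {p q r} : (p < q)%O -> a p < a q -> (p <= r)%O -> a p <= a r.
Proof.
move=> pq apq pr; case: (ltgtP r q) => [rq | qr | ->]; last exact: ltW.
- move: pr; rewrite le_eqVlt => /predU1P[-> // | pr].
  by case: (no_valley pr rq) => h; lra.
- by case: (no_peak pq qr) => h; lra.
Qed.

Lemma rise_nondecreasing p q : (p < q)%O -> a p < a q ->
  forall x y, (x <= y)%O -> a x <= a y.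
Proof.
move=> pq apq x y; rewrite le_eqVlt => /predU1P[-> // | xy].
pose P := Order.min p x.
have Pp : (P <= p)%O by rewrite ge_min lexx.
have Px : (P <= x)%O by rewrite ge_min lexx orbT.
have aPq : a P < a q := le_lt_trans (rise_ge_before pq apq Pp) apq.
have aPy : a P <= a y := rise_le_after (le_lt_trans Pp pq) aPq (le_trans Px (ltW xy)).
move: Px; rewrite le_eqVlt => /predU1P[<- // | Px].
by case: (no_peak Px xy) => h; lra.
Qed.

Lemma monotone_of_no_peak_no_valley :
  (forall i j, (i <= j)%O -> a i <= a j) \/ (forall i j, (i <= j)%O -> a j <= a i).
Proof.
have [[p [q [pq apq]]] | no_rise] := pselect (exists p q, (p < q)%O /\ a p < a q).
  by left; apply: rise_nondecreasing pq apq.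
right => i j; rewrite le_eqVlt => /predU1P[-> // | ij].
by rewrite leNgt; apply/negP => aij; apply: no_rise; exists i, j.
Qed.

End NoPeakNoValley.

Section OrderContinuity.
Context {R : realType} {dL : Order.disp_t} {L : orderType dL}.

Definition ocombine (op : L -> L -> L) (u v : option L) : option L :=
  match u, v with
  | Some x, Some y => Some (op x y)
  | Some x, None | None, Some x => Some x
  | None, None => None
  end.

Lemma in_order_interval_meet a1 b1 a2 b2 y :
  in_order_interval (ocombine Order.max a1 a2) (ocombine Order.min b1 b2) y =
  in_order_interval a1 b1 y && in_order_interval a2 b2 y.
Proof.
rewrite /in_order_interval.
case: a1 => [a1|]; case: a2 => [a2|]; case: b1 => [b1|]; case: b2 => [b2|] /=;
  rewrite ?gt_max ?lt_min; do ?[case: (_ < _)%O]; by [].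
Qed.

Lemma order_continuousD (f g : L -> R) : order_continuous f -> order_continuous g ->
  order_continuous (fun t => f t + g t).
Proof.
move=> cf cg t e e0.
have e2 : 0 < e / 2 by rewrite divr_gt0.
have [a1 [b1 [t1 near_f]]] := cf t _ e2.
have [a2 [b2 [t2 near_g]]] := cg t _ e2.
exists (ocombine Order.max a1 a2), (ocombine Order.min b1 b2).
split; first by rewrite in_order_interval_meet t1 t2.
move=> y; rewrite in_order_interval_meet => /andP[/near_f ef /near_g eg].
rewrite (_ : _ - _ = (f y - f t) + (g y - g t)); last by ring.
by apply: le_lt_trans (ler_normD _ _) _; rewrite [e](splitr e) ltrD.
Qed.

End OrderContinuity.

Section RangeExtrema.
Context {R : realType}.

Lemma inf_range_min {T : Type} (g : T -> R) t0 :
  (forall t, g t0 <= g t) -> inf (range g) = g t0.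
Proof.
move=> g_min; apply/eqP; rewrite eq_le; apply/andP; split.
  by apply: ge_inf; [exists (g t0) => _ [t _ <-] | exists t0].
by apply: lb_le_inf; [exists (g t0), t0 | move=> _ [t _ <-]].
Qed.

Lemma sup_range_max {T : Type} (g : T -> R) t0 :
  (forall t, g t <= g t0) -> sup (range g) = g t0.
Proof.
move=> g_max; apply/eqP; rewrite eq_le; apply/andP; split.
  by apply: ge_sup; [exists (g t0), t0 | move=> _ [t _ <-]].
by apply: ub_le_sup; [exists (g t0) => _ [t _ <-] | exists t0].
Qed.

End RangeExtrema.

Section MLBasics.
Context {R : realType} {dL : Order.disp_t} {L : orderType dL}.
Implicit Types f x : ML R L.

Lemma ML_ge0 f t : 0 <= sval f t.
Proof. by case: f => f [/= /(_ t) /andP[]]. Qed.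

Lemma ML_le1 f t : sval f t <= 1.
Proof. by case: f => f [/= /(_ t) /andP[]]. Qed.

Lemma ML_nondecreasing f {s t} : (s <= t)%O -> sval f s <= sval f t.
Proof. by case: f => f [/= _ mono *]; apply: mono. Qed.

Lemma ML_continuous f : order_continuous (sval f).
Proof. by case: f => f []. Qed.

Lemma ML_inf f : inf (range (sval f)) = 0.
Proof. by case: f => f []. Qed.

Lemma ML_sup f : sup (range (sval f)) = 1.
Proof. by case: f => f []. Qed.

Lemma ML_bottom f b : (forall t, (b <= t)%O) -> sval f b = 0.
Proof.
by move=> b_min; rewrite -(ML_inf f) (inf_range_min (sval f) b) // => t; apply: ML_nondecreasing.
Qed.

Lemma ML_top f b : (forall t, (t <= b)%O) -> sval f b = 1.
Proof.
by move=> b_max; rewrite -(ML_sup f) (sup_range_max (sval f) b) // => t; apply: ML_nondecreasing.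
Qed.

Definition clamp01 (u : R) : R := if u <= 0 then 0 else if 1 <= u then 1 else u.

Lemma clamp01_ge0 u : 0 <= clamp01 u.
Proof. by rewrite /clamp01; case: (lerP u 0) => hu; case: (lerP 1 u) => hu1; lra. Qed.

Lemma clamp01_le1 u : clamp01 u <= 1.
Proof. by rewrite /clamp01; case: (lerP u 0) => hu; case: (lerP 1 u) => hu1; lra. Qed.

Lemma clamp01_le0 u : u <= 0 -> clamp01 u = 0.
Proof. by rewrite /clamp01 => ->. Qed.

Lemma clamp01_ge1 u : 1 <= u -> clamp01 u = 1.
Proof. by rewrite /clamp01 => hu; rewrite hu; case: (lerP u 0) => //; lra. Qed.

Lemma clamp01_nondecreasing u w : u <= w -> clamp01 u <= clamp01 w.
Proof.
rewrite /clamp01 => uw.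
by case: (lerP u 0) => hu; case: (lerP 1 u) => hu1; case: (lerP w 0) => hw;
  case: (lerP 1 w) => hw1; lra.
Qed.

Lemma clamp01_lipschitz u w : `|clamp01 u - clamp01 w| <= `|u - w|.
Proof.
have := ler_norm (u - w); have := ler_norm (w - u); rewrite distrC.
move: `|u - w| => n h1 h2; rewrite ler_norml /clamp01.
by case: (lerP u 0) => hu; case: (lerP 1 u) => hu1; case: (lerP w 0) => hw;
  case: (lerP 1 w) => hw1; apply/andP; split; lra.
Qed.

Definition ramp (g : L -> R) (r δ : R) (t : L) : R := clamp01 ((g t - r) / δ).

Section Ramp.
Context {x : ML R L} {r δ : R}.
Hypothesis δ_gt0 : 0 < δ.

Lemma ramp_eq0 t : sval x t <= r -> ramp (sval x) r δ t = 0.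
Proof. by move=> xr; apply: clamp01_le0; rewrite pmulr_lle0 ?invr_gt0 // subr_le0. Qed.

Lemma ramp_eq1 t : r + δ <= sval x t -> ramp (sval x) r δ t = 1.
Proof. by move=> rx; apply: clamp01_ge1; rewrite ler_pdivlMr // mul1r; lra. Qed.

Lemma ramp_inML : (exists t, sval x t <= r) -> (exists t, r + δ <= sval x t) ->
  inML (ramp (sval x) r δ).
Proof.
move=> [t0 /ramp_eq0 h0] [t1 /ramp_eq1 h1]; split.
- by move=> t; rewrite clamp01_ge0 clamp01_le1.
- move=> s t st; apply/clamp01_nondecreasing/ler_wpM2r; first by rewrite invr_ge0 ltW.
  by rewrite lerD2r ML_nondecreasing.
- move=> t e e0.
  have [u [v [tuv near]]] := ML_continuous x t _ (mulr_gt0 e0 δ_gt0).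
  exists u, v; split => // s /near xs.
  apply: le_lt_trans (clamp01_lipschitz _ _) _.
  rewrite -mulrBl (_ : _ - _ - _ = sval x s - sval x t); last by ring.
  by rewrite normrM [`|δ^-1|]gtr0_norm ?invr_gt0 // ltr_pdivrMr.
- by rewrite (inf_range_min _ t0) // h0 => t; apply: clamp01_ge0.
- by rewrite (sup_range_max _ t1) // h1 => t; apply: clamp01_le1.
Qed.

End Ramp.
End MLBasics.

Section PhiVal.
Context {R : realType} {dL : Order.disp_t} {L : orderType dL}.
Implicit Types f g : ML R L.

Lemma phi_val_le1 f g α : phi_val f g α <= 1.
Proof.
rewrite /phi_val; set E := (X in sup X).
have [->|/set0P E_nonempty] := eqVneq E set0; first by rewrite sup0 ler01.
by apply: ge_sup => // _ [t _ <-]; apply: ML_le1.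
Qed.

Lemma phi_val_ge {f g α t} : sval f t + sval g t = α -> sval f t <= phi_val f g α.
Proof.
move=> fgt; apply: ub_le_sup; last by exists t.
by exists 1 => _ [s _ <-]; apply: ML_le1.
Qed.

Lemma phi_val_gt {f g α c} : 0 <= c -> c < phi_val f g α ->
  exists t, sval f t + sval g t = α /\ c < sval f t.
Proof.
rewrite /phi_val; set E := (X in sup X) => c0.
have [->|/set0P E_nonempty] := eqVneq E set0; first by rewrite sup0; lra.
by move/(sup_gt E_nonempty) => [_ [t fgt <-] ct]; exists t.
Qed.

End PhiVal.

Local Notation rat01 := {q : rat | 0 <= q <= 1}.

Lemma ratr01 {R : realFieldType} (q : rat01) : 0 <= (ratr (sval q) : R) <= 1.
Proof.
case: q => q /= /andP[q0 q1].
by rewrite -(rmorph0 (@ratr R)) -(rmorph1 (@ratr R)) !ler_rat q0 q1.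
Qed.

Lemma exists_rat01_between {R : realType} {u w : R} : 0 <= u -> u < w -> w <= 1 ->
  exists q : rat01, u < ratr (sval q) < w.
Proof.
move=> u0 uw w1; have [q] := rat_in_itvoo uw; rewrite in_itv /= => /andP[uq qw].
have q01 : 0 <= q <= 1.
  rewrite -(ler_rat R 0) -(ler_rat R q 1) rmorph0 rmorph1.
  by apply/andP; split; lra.
by exists (exist _ q q01); rewrite /= uq qw.
Qed.

Lemma truncated_sub_sub {R : realDomainType} (u w : R) : 0 <= u -> 0 <= w ->
  Num.max (u - Num.max (u - w) 0) 0 = Num.min u w.
Proof.
move=> u0 w0; have [uw|wu] := leP u w.
  by rewrite (max_idPr (_ : u - w <= 0)) ?subr_le0 // subr0 (max_idPl u0).
rewrite (max_idPl (_ : 0 <= u - w)) ?subr_ge0 ?ltW // (_ : u - (u - w) = w); last by ring.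
exact: max_idPl w0.
Qed.

(* [FPhi c 0 0] evaluates to [c / 2] ([phi_val_diag]), which supplies the rational
   constants that the language lacks. *)
Definition chi (α β c1 c2 : rat01) : formula :=
  let u := FMinus (FHalf (FPhi α 2 0)) (FPhi c1 0 0) in
  let w := FMinus (FHalf (FPhi β 1 2)) (FPhi c2 0 0) in
  FMinus u (FMinus u w).

Definition psi (α β c1 c2 : rat01) : formula := FSup 2 (chi α β c1 c2).

Lemma psi_fv_lt2 α β c1 c2 : all (fun k => (k < 2)%N) (fv (psi α β c1 c2)).
Proof. by []. Qed.

Section LinearContinuum.
Context {R : realType} {dL : Order.disp_t} {L : orderType dL}.
Hypotheses (dense : dense_order L) (lub : lub_property L).
Variables (bot top : L).
Hypotheses (bot_min : forall t, (bot <= t)%O) (top_max : forall t, (t <= top)%O).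

Section IntermediateValue.
Variables (F : L -> R) (v : R) (s : L).
Hypotheses (F_cont : order_continuous F) (F_bot : F bot <= v) (F_top : v <= F top).
Hypothesis s_ub : forall t, F t <= v -> (t <= s)%O.

Lemma ge_at_sup_sublevel : v <= F s.
Proof.
rewrite leNgt; apply/negP => Fs_lt.
have gap : 0 < v - F s by rewrite subr_gt0.
have [a [b [s_in near]]] := F_cont s _ gap.
have [z [s_z z_in]] : exists z, (s < z)%O /\ in_order_interval a b z.
  case: b s_in {near} => [b|] s_in.
    have /andP[a_s s_b] := s_in.
    have [z [s_z z_b]] := dense _ _ s_b.
    exists z; split => //; rewrite /in_order_interval z_b andbT.
    by case: a {s_in} a_s => //= a a_s; apply: lt_trans a_s s_z.
  have s_top : (s < top)%O.
    rewrite lt_neqAle top_max andbT; apply/eqP => s_top.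
    by move: Fs_lt F_top; rewrite s_top; lra.
  exists top; split => //; rewrite /in_order_interval andbT.
  by case/andP: s_in; case: a => //= a a_s _; apply: lt_trans a_s s_top.
have Fz : F z <= v by move: (near z z_in); rewrite ltr_norml => /andP[_ ?]; lra.
by move: (s_ub z Fz); rewrite leNgt s_z.
Qed.

Hypothesis s_least : forall b, (forall t, F t <= v -> (t <= b)%O) -> (s <= b)%O.

Lemma le_at_sup_sublevel : F s <= v.
Proof.
rewrite leNgt; apply/negP => v_lt.
have gap : 0 < F s - v by rewrite subr_gt0.
have [a [b [s_in near]]] := F_cont s _ gap.
have above t : in_order_interval a b t -> v < F t.
  by move/near; rewrite ltr_norml => /andP[? _]; lra.
case: a s_in above {near} => [a|] s_in above; last first.
  have : in_order_interval None b bot.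
    by case: b s_in {above} => [b|] //= s_b; apply: le_lt_trans (bot_min s) s_b.
  by move/above; rewrite ltNge F_bot.
have /andP[a_s _] := s_in.
suff : (s <= a)%O by rewrite leNgt a_s.
apply: s_least => t Ft; rewrite leNgt; apply/negP => a_t.
have : in_order_interval (Some a) b t.
  rewrite /in_order_interval /= a_t /=.
  by case: b s_in {above} => [b|] //= /andP[_ s_b]; apply: le_lt_trans (s_ub t Ft) s_b.
by move/above; rewrite ltNge Ft.
Qed.

End IntermediateValue.

Lemma order_ivt (F : L -> R) v : order_continuous F -> F bot <= v -> v <= F top ->
  exists t, F t = v.
Proof.
move=> F_cont F_bot F_top.
have [s [s_ub s_least]] := lub [set t | F t <= v]
  (ex_intro _ bot F_bot) (ex_intro _ top (fun t _ => top_max t)).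
exists s; apply/eqP; rewrite eq_le; apply/andP; split.
  exact: (le_at_sup_sublevel _ _ _ F_cont F_bot s_ub s_least).
exact: (ge_at_sup_sublevel _ _ _ F_cont F_top s_ub).
Qed.

Lemma ML_sum_hits (f g : ML R L) v : 0 <= v -> v <= 2 -> exists t, sval f t + sval g t = v.
Proof.
move=> v0 v2; apply: (order_ivt (fun t => sval f t + sval g t)).
- by apply: order_continuousD; apply: ML_continuous.
- by rewrite !(ML_bottom _ _ bot_min) addr0.
- by rewrite !(ML_top _ _ top_max).
Qed.

Lemma phi_val_diag (x : ML R L) c : 0 <= c <= 1 -> phi_val x x c = c / 2.
Proof.
move=> /andP[c0 c1].
have [t xxt] : exists t, sval x t + sval x t = c by apply: ML_sum_hits => //; lra.
apply/eqP; rewrite eq_le; apply/andP; split.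
  by apply: ge_sup; [exists (sval x t), t | move=> _ [s /= xxs <-]; lra].
by have := phi_val_ge xxt; lra.
Qed.

Section Psi.
Variable env : nat -> ML R L.
Variables α β c1 c2 : rat01.
Local Notation a := (ratr (sval α) : R).
Local Notation b := (ratr (sval β) : R).
Local Notation k1 := (ratr (sval c1) : R).
Local Notation k2 := (ratr (sval c2) : R).
Local Notation x := (env 0%N).
Local Notation y := (env 1%N).

Lemma eval_chi g : eval (upd env 2 g) (chi α β c1 c2) =
  Num.min (Num.max (phi_val g x a / 2 - k1 / 2) 0)
          (Num.max (phi_val y g b / 2 - k2 / 2) 0).
Proof. by rewrite /= !phi_val_diag ?ratr01 // truncated_sub_sub // le_max lexx orbT. Qed.

Lemma eval_psi :
  eval env (psi α β c1 c2) = sup (range (fun g => eval (upd env 2 g) (chi α β c1 c2))).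
Proof. by []. Qed.

Lemma eval_psi_gt0 g : k1 < phi_val g x a -> k2 < phi_val y g b ->
  0 < eval env (psi α β c1 c2).
Proof.
move=> k1_lt k2_lt.
have chi_gt0 : 0 < eval (upd env 2 g) (chi α β c1 c2).
  by rewrite eval_chi lt_min !lt_max; apply/andP; split; apply/orP; left; lra.
rewrite eval_psi; apply: lt_le_trans chi_gt0 _; apply: ub_le_sup; last by exists g.
have /andP[k1_ge0 _] := ratr01 (R := R) c1.
exists 1 => _ [h _ <-]; have := phi_val_le1 h x a.
by rewrite eval_chi ge_min ge_max ler01 andbT => ?; apply/orP; left; lra.
Qed.

Lemma eval_psi_eq0 : (forall g, phi_val g x a <= k1 \/ phi_val y g b <= k2) ->
  eval env (psi α β c1 c2) = 0.
Proof.
move=> small; have chi_eq0 g : eval (upd env 2 g) (chi α β c1 c2) = 0.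
  rewrite eval_chi; apply/eqP; rewrite eq_le le_min !le_max lexx !orbT andbT.
  by rewrite ge_min !ge_max lexx !andbT; apply/orP; case: (small g) => ?; [left|right]; lra.
by rewrite eval_psi (sup_range_max _ x) chi_eq0 // => g; rewrite !chi_eq0.
Qed.

Lemma psi_gt0_at t : sval x t + k1 < a -> k2 < b -> b <= sval y t ->
  0 < eval env (psi α β c1 c2).
Proof.
move=> x_lt k2_b b_y.
have /andP[a_ge0 a_le1] := ratr01 (R := R) α; have /andP[k1_ge0 _] := ratr01 (R := R) c1.
pose δ := (a - k1 - sval x t) / 2.
have δ_gt0 : 0 < δ by rewrite divr_gt0 //; lra.
have h_ML : inML (ramp (sval x) (sval x t) δ).
  apply: ramp_inML => //; first by exists t.
  by exists top; rewrite (ML_top _ _ top_max) /δ; lra.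
pose h : ML R L := exist _ _ h_ML.
have hE : sval h = ramp (sval x) (sval x t) δ by [].
apply: (@eval_psi_gt0 h).
- have [ta h_x_ta] : exists ta, sval h ta + sval x ta = a.
    by apply: ML_sum_hits; lra.
  have x_ta : sval x ta <= sval x t + δ.
    rewrite leNgt; apply/negP => x_ta_gt.
    move: h_x_ta; rewrite hE ramp_eq1 ?ltW //.
    by have := ML_ge0 x t; lra.
  by apply: lt_le_trans (phi_val_ge h_x_ta); rewrite /δ in x_ta; lra.
- have [tb y_h_tb] : exists tb, sval y tb + sval h tb = b.
    by have /andP[? ?] := ratr01 (R := R) β; apply: ML_sum_hits; lra.
  apply: lt_le_trans k2_b (le_trans _ (phi_val_ge y_h_tb)).
  case/orP: (le_total tb t) => [tb_t | t_tb].
    have h_t : sval h t = 0 by rewrite hE ramp_eq0.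
    by have := ML_nondecreasing h tb_t; lra.
  by have := ML_nondecreasing y t_tb; lra.
Qed.

Lemma psi_eq0_at t : a <= sval x t + k1 -> sval y t <= k2 -> b <= k1 + k2 ->
  eval env (psi α β c1 c2) = 0.
Proof.
move=> a_le y_le b_le; apply: eval_psi_eq0 => g.
have /andP[k1_ge0 _] := ratr01 (R := R) c1; have /andP[k2_ge0 _] := ratr01 (R := R) c2.
have [|k1_lt] := leP (phi_val g x a) k1; [by left | right].
rewrite leNgt; apply/negP => k2_lt.
have [ta [g_x_ta k1_g]] := phi_val_gt k1_ge0 k1_lt.
have [tb [y_g_tb k2_y]] := phi_val_gt k2_ge0 k2_lt.
case/orP: (le_total tb t) => [tb_t | t_tb].
  by have := ML_nondecreasing y tb_t; lra.
have := ML_nondecreasing x t_tb.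
case/orP: (le_total ta tb) => [ta_tb | tb_ta].
  by have := ML_nondecreasing g ta_tb; lra.
by have := ML_nondecreasing x tb_ta; lra.
Qed.

End Psi.

Section Separation.
Variables (env1 env2 : nat -> ML R L) (t1 t2 : L).
Local Notation r1 := (sval (env1 0%N) t1).
Local Notation r2 := (sval (env1 1%N) t1).
Local Notation s1 := (sval (env2 0%N) t2).
Local Notation s2 := (sval (env2 1%N) t2).

Lemma psi_separates : r1 < s1 -> s2 < r2 ->
  exists α β c1 c2, 0 < eval env1 (psi α β c1 c2) /\ eval env2 (psi α β c1 c2) = 0.
Proof.
move=> r1_s1 s2_r2.
have r1_ge0 := ML_ge0 (env1 0%N) t1; have r2_le1 := ML_le1 (env1 1%N) t1.
have s1_le1 := ML_le1 (env2 0%N) t2; have s2_ge0 := ML_ge0 (env2 1%N) t2.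
have [c2 /andP[s2_c2 c2_r2]] := exists_rat01_between s2_ge0 s2_r2 r2_le1.
have c2_ge0 : 0 <= ratr (sval c2) :> R by lra.
have c2_lt : ratr (sval c2) < Num.min r2 (ratr (sval c2) + (s1 - r1) / 2).
  by rewrite lt_min c2_r2 /=; lra.
have min_le1 : Num.min r2 (ratr (sval c2) + (s1 - r1) / 2) <= 1 by rewrite ge_min r2_le1.
have [β /andP[c2_b]] := exists_rat01_between c2_ge0 c2_lt min_le1.
rewrite lt_min => /andP[b_r2 b_c2].
have [c1 /andP[c1_lo c1_hi]] := @exists_rat01_between R
  (ratr (sval β) - ratr (sval c2)) ((s1 - r1) / 2) ltac:(lra) ltac:(lra) ltac:(lra).
have [α /andP[a_lo a_hi]] := @exists_rat01_between R
  (r1 + ratr (sval c1)) s1 ltac:(lra) ltac:(lra) s1_le1.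
exists α, β, c1, c2; split.
  by apply: (psi_gt0_at env1 α β c1 c2 t1); lra.
by apply: (psi_eq0_at env2 α β c1 c2 t2); lra.
Qed.

End Separation.

Lemma indiscernible_no_crossing {dI : Order.disp_t} {I : orderType dI}
  (f : I -> ML R L) : indiscernible f -> forall t i j k l, (i < j)%O -> (k < l)%O ->
  sval (f i) t < sval (f k) t -> sval (f j) t <= sval (f l) t.
Proof.
move=> f_ind t i j k l ij kl fik; rewrite leNgt; apply/negP => flj.
pose pair (u w : I) (n : nat) := if n == 0%N then u else w.
have pair_incr u w : (u < w)%O -> forall m n, (m < n < 2)%N -> (pair u w m < pair u w n)%O.
  by move=> uw [|[|m]] [|[|n]] //=; rewrite !ltnS ltn0 andbF.
have [α [β [c1 [c2 [pos zero]]]]] :=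
  psi_separates (fun n => f (pair i j n)) (fun n => f (pair k l n)) t t fik flj.
have := f_ind (psi α β c1 c2) 2 (pair i j) (pair k l) (psi_fv_lt2 _ _ _ _)
  (pair_incr _ _ ij) (pair_incr _ _ kl).
by move=> same; move: pos; rewrite same zero ltxx.
Qed.

End LinearContinuum.

Local Close Scope classical_set_scope.

Theorem mainTheorem18 (R : realType) (dL : Order.disp_t) (L : orderType dL)
  (dI : Order.disp_t) (I : orderType dI) (f : I -> ML R L) (a : I -> R) :
  linear_continuum_with_endpoints L ->
  indiscernible f ->
  (exists t : L, forall i, a i = sval (f i) t) ->
  (forall i j : I, (i <= j)%O -> a i <= a j) \/
  (forall i j : I, (i <= j)%O -> a j <= a i).
Proof.
move=> [dense lub [[bot bot_min] [top top_max]]] f_ind [t a_f].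
have no_crossing := indiscernible_no_crossing dense lub _ _ bot_min top_max f f_ind t.
apply: monotone_of_no_peak_no_valley => i j k ij jk; rewrite !a_f.
- have [|fij] := leP (sval (f j) t) (sval (f i) t); [by left | right].
  exact: no_crossing ij jk fij.
- have [|fji] := leP (sval (f i) t) (sval (f j) t); [by left | right].
  exact: no_crossing jk ij fji.
Qed.
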